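(* Let $\Sigma$ be a finite set, $I\subseteq\Sigma\times\Sigma$ a symmetric irreflexive relation, $M=M(\Sigma,I)$, $\Sigma_0\subseteq\Sigma$, $I_0=(\Sigma_0\times\Sigma_0)\cap I$ and $M_0=M(\Sigma_0,I_0)\subseteq M$. Let $B\subseteq M$ consist of the identity $1$ together with all elements $t\in M\setminus\{1\}$ such that the first factor $w_1$ of the Foata normal form $t=w_1w_2\cdots w_n$ contains only letters of $\Sigma\setminus\Sigma_0$. Then every $w\in M$ can be written as $w=au$ with $a\in M_0$ and $u\in B$, and this decomposition is unique: if $au=bv$ with $a,b\in M_0$, $u,v\in B$, then $a=b$ and $u=v$. Consequently $B$ is a basis of $\mathbb{Z}M$ as a free left $\mathbb{Z}M_0$-module.
   Context: For a finite alphabet $\Sigma$ and a symmetric irreflexive relation $I\subseteq \Sigma\times\Sigma$, the free partially commutative monoid $M(\Sigma,I)$ is the monoid with presentation $\langle \Sigma \mid ab=ba \text{ for all } (a,b)\in I\rangle$; $M(\Sigma_0,I_0)$ is identified with its (injective) canonical image in $M$. Let $D=(\Sigma\times\Sigma)\setminus I$. Fix a total order on $\Sigma$. An element $x\in M(\Sigma,I)$ is written in Foata normal form if either it is the empty word or $x=x_1x_2\cdots x_n$ with $n>0$ and nonempty words $x_i$ such that: each $x_i$ is a product of distinct pairwise commuting letters written in increasing order; and for each $1\le i<n$ and each letter $a$ of $x_{i+1}$ there is a letter $b$ of $x_i$ with $(a,b)\in D$. Every element of $M(\Sigma,I)$ has a unique Foata normal form. *)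

(* Free partially commutative monoids M(Sigma, I) represented
   by words (seq Sigma) modulo the congruence generated by ab = ba, (a,b) in I. *)
From mathcomp Require Import all_boot.
Set Implicit Arguments. Unset Strict Implicit. Unset Printing Implicit Defensive.

Section Trace.
Variable Sigma : finType.
Variable I : rel Sigma.

Inductive tequiv : seq Sigma -> seq Sigma -> Prop :=
| tequiv_refl w : tequiv w w
| tequiv_swap u v a b : I a b -> tequiv (u ++ a :: b :: v) (u ++ b :: a :: v)
| tequiv_sym w1 w2 : tequiv w1 w2 -> tequiv w2 w1
| tequiv_trans w1 w2 w3 : tequiv w1 w2 -> tequiv w2 w3 -> tequiv w1 w3.

Definition dep (a b : Sigma) : bool := ~~ I a b.

Definition ltS (a b : Sigma) : bool := (enum_rank a < enum_rank b)%N.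

Definition foata_step (x : seq Sigma) : bool :=
  [&& x != [::], sorted ltS x &
      all (fun a => all (fun b => (a != b) ==> I a b) x) x].

Definition is_foata (F : seq (seq Sigma)) : bool :=
  all foata_step F &&
  sorted (fun x y => all (fun a => has (fun b => dep a b) x) y) F.

Definition inB (Sigma0 : {set Sigma}) (t : seq Sigma) : Prop :=
  tequiv t [::] \/
  exists F : seq (seq Sigma),
    [/\ is_foata F, tequiv t (flatten F) &
        all (fun a => a \notin Sigma0) (head [::] F)].

(* Membership in M0 = M(Sigma0, I0), identified with its image in M:
   the element is represented by a word over Sigma0. *)
Definition inM0 (Sigma0 : {set Sigma}) (a : seq Sigma) : Prop :=
  exists a0 : seq Sigma, all (fun x => x \in Sigma0) a0 /\ tequiv a a0.

End Trace.

From mathcomp Require Import all_boot.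
Set Implicit Arguments. Unset Strict Implicit. Unset Printing Implicit Defensive.

(* A letter x is initial in a word w when it can be commuted to the front,
   i.e. w = x w' in M.  The initial letters of a trace are exactly the letters
   of its first Foata factor, so B is the set of traces having no initial
   letter in Sigma0.  Existence: while some letter of Sigma0 is initial in w,
   move it to the left factor; the length of w decreases.  Uniqueness: if
   a = x a', then x is initial in b v; it cannot be initial in v, so it is
   initial in b, and left cancellation of x reduces to a shorter a'. *)

Lemma map_enum_val_ord (T : finType) : map enum_val (enum 'I_#|T|) = enum T.
Proof.
case Es: (enum T) => [|x0 s].
  have: size (enum 'I_#|T|) == 0 by rewrite size_enum_ord cardE Es.
  by rewrite size_eq0 => /eqP ->.
rewrite -Es; apply: (@eq_from_nth _ x0).
  by rewrite size_map size_enum_ord cardE.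
move=> i; rewrite size_map size_enum_ord => lt_i.
by rewrite (nth_map (Ordinal lt_i)) ?size_enum_ord // (enum_val_nth x0) nth_enum_ord.
Qed.

Lemma sorted_enum_ltS (T : finType) : sorted (@ltS T) (enum T).
Proof.
rewrite -map_enum_val_ord sorted_map; have := iota_ltn_sorted 0 #|T|.
rewrite -val_enum_ord sorted_map.
by apply: sub_sorted => i j; rewrite /ltS /= !enum_valK.
Qed.

Section Traces.
Variable Sigma : finType.
Variable I : rel Sigma.
Hypothesis I_sym : symmetric I.
Hypothesis I_irr : irreflexive I.

Notation teq := (tequiv I).

Lemma tequiv_catl p u v : teq u v -> teq (p ++ u) (p ++ v).
Proof.
elim=> [w|u1 v1 a b Iab|w1 w2 _ IH|w1 w2 w3 _ IH1 _ IH2].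
- exact: tequiv_refl.
- by rewrite !catA; apply: tequiv_swap.
- exact: tequiv_sym.
- exact: tequiv_trans IH2.
Qed.

Lemma tequiv_catr s u v : teq u v -> teq (u ++ s) (v ++ s).
Proof.
elim=> [w|u1 v1 a b Iab|w1 w2 _ IH|w1 w2 w3 _ IH1 _ IH2].
- exact: tequiv_refl.
- by rewrite -!catA; apply: tequiv_swap.
- exact: tequiv_sym.
- exact: tequiv_trans IH2.
Qed.

Lemma tequiv_size u v : teq u v -> size u = size v.
Proof. by elim=> // [u1 v1 a b _|w1 w2 w3 _ -> _ ->]; rewrite ?size_cat. Qed.

Lemma rem_swap x u v a b : I a b ->
  teq (rem x (u ++ a :: b :: v)) (rem x (u ++ b :: a :: v)).
Proof.
move=> Iab; elim: u => [|z u IH] /=.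
  have [<- | _] := eqVneq a x.
    by have [-> | _] := eqVneq b a; apply: tequiv_refl.
  by case: ifP => _; [apply: tequiv_refl | apply: (tequiv_swap [::])].
by case: ifP => _; [apply: tequiv_swap | apply: (tequiv_catl [:: z])].
Qed.

Lemma tequiv_rem x u v : teq u v -> teq (rem x u) (rem x v).
Proof.
elim=> [w|u1 v1 a b Iab|w1 w2 _ IH|w1 w2 w3 _ IH1 _ IH2].
- exact: tequiv_refl.
- exact: rem_swap.
- exact: tequiv_sym.
- exact: tequiv_trans IH2.
Qed.

Lemma tequiv_consK x u v : teq (x :: u) (x :: v) -> teq u v.
Proof. by move/(tequiv_rem x); rewrite /= eqxx. Qed.

Fixpoint initial (x : Sigma) (w : seq Sigma) : bool :=
  if w is z :: s then (x == z) || I x z && initial x s else false.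

Lemma initial_mem x w : initial x w -> x \in w.
Proof.
elim: w => //= z s IH /orP [/eqP -> | /andP [_ /IH xs]].
  exact: mem_head.
by rewrite inE xs orbT.
Qed.

Lemma initial_cat x u v :
  initial x (u ++ v) = initial x u || all (I x) u && initial x v.
Proof. by elim: u => //= z u ->; case: (x == z); case: (I x z); case: initial. Qed.

Lemma initial_swap x u v a b : I a b ->
  initial x (u ++ a :: b :: v) = initial x (u ++ b :: a :: v).
Proof.
move=> Iab; rewrite !initial_cat /=; congr (_ || (_ && _)).
have [<- | _] := eqVneq a x; first by rewrite Iab orbT.
have [<- | _] := eqVneq b x; first by rewrite I_sym Iab.
by rewrite andbCA.
Qed.

Lemma tequiv_initial x u v : teq u v -> initial x u = initial x v.
Proof. by elim=> // [u1 v1 a b /initial_swap|w1 w2 w3 _ -> _ ->]. Qed.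

Lemma tequiv_cons_rem x w : initial x w -> teq w (x :: rem x w).
Proof.
elim: w => //= z s IH /orP [/eqP <- | /andP [Ixz /IH xs]].
  by rewrite eqxx; apply: tequiv_refl.
have /negPf -> : z != x by apply: contraTneq Ixz => ->; rewrite I_irr.
apply: tequiv_trans (tequiv_catl [:: z] xs) _.
by apply: (tequiv_swap [::]); rewrite I_sym.
Qed.

Lemma initial_indep x y w : initial x w -> initial y w -> x != y -> I x y.
Proof.
elim: w => //= z s IH /orP [/eqP -> | /andP [Ixz xs]]
  /orP [/eqP -> | /andP [Iyz ys]].
- by rewrite eqxx.
- by rewrite I_sym.
- by [].
- exact: IH.
Qed.

Lemma initial_cat_clique a f r :
  {in f, forall b, a != b -> I a b} -> a \in f -> initial a (f ++ r).
Proof.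
elim: f => //= z f IH Iaf; rewrite inE.
have [// | az /= af] := eqVneq a z.
rewrite Iaf ?mem_head //= IH // => b bf; apply: Iaf.
by rewrite inE bf orbT.
Qed.

Lemma is_foata_cons f F : is_foata I (f :: F) =
  [&& foata_step I f, is_foata I F & all (fun a => has (dep I a) f) (head [::] F)].
Proof.
case: F => [|g F]; rewrite /is_foata /= ?andbT // -/(foata_step I f) -/(foata_step I g).
by rewrite -!andbA [path _ _ _ && _]andbC.
Qed.

Lemma foata_initial F x :
  is_foata I F -> initial x (flatten F) = (x \in head [::] F).
Proof.
elim: F => [|f F IH] //=; rewrite is_foata_cons => /and3P [stepf /IH {}IH linkF].
apply/idP/idP => [| xf]; last first.
  apply: initial_cat_clique => [b bf xb|]; last exact: xf.
  by case/and3P: stepf => _ _ /allP/(_ x xf)/allP/(_ b bf)/implyP; apply.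
rewrite initial_cat IH => /orP [/initial_mem // | /andP [Ixf xF]].
have /hasP [b bf] := allP linkF x xF.
by rewrite /dep (allP Ixf b bf).
Qed.

Definition initials (w : seq Sigma) := [seq x <- enum Sigma | initial x w].

Lemma mem_initials w x : (x \in initials w) = initial x w.
Proof. by rewrite mem_filter mem_enum andbT. Qed.

Lemma foata_step_initials w : w != [::] -> foata_step I (initials w).
Proof.
case: w => // z s _; apply/and3P; split.
- by apply/eqP => /(congr1 (fun m => z \in m)); rewrite mem_initials /= eqxx.
- apply: sorted_filter; last exact: sorted_enum_ltS.
  by move=> ? ? ?; apply: ltn_trans.
- apply/allP => a; rewrite mem_initials => az.
  apply/allP => b; rewrite mem_initials => bz; apply/implyP.
  exact: initial_indep az bz.
Qed.

Lemma tequiv_cat_initial m w : uniq m -> all (initial^~ w) m ->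
  exists w', teq w (m ++ w').
Proof.
elim: m w => [|x m IH] w /=; first by exists w; apply: tequiv_refl.
case/andP=> xm um /andP [xw mw].
have wx := tequiv_cons_rem xw.
have /(IH _ um) [w' ww'] : all (initial^~ (rem x w)) m.
  apply/allP => y ym; move/allP/(_ y ym): mw.
  rewrite (tequiv_initial y wx) /= => /orP [/eqP yx | /andP [] //].
  by rewrite -yx ym in xm.
by exists w'; apply: tequiv_trans wx (tequiv_catl [:: x] ww').
Qed.

Lemma initials_dep w w' a :
  teq w (initials w ++ w') -> initial a w' -> has (dep I a) (initials w).
Proof.
move=> ww' aw'; apply: contraT; rewrite -all_predC => /allP Ia.
have aw : initial a w.
  rewrite (tequiv_initial a ww') initial_cat aw' andbT; apply/orP; right.
  by apply/allP => b /Ia; rewrite /= /dep negbK.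
by have := Ia a; rewrite mem_initials aw /= /dep I_irr => /(_ isT).
Qed.

Lemma foata_exists w : exists F, is_foata I F /\ teq w (flatten F).
Proof.
have [n] := ubnP (size w); elim: n w => // n IHn [|z s] /ltnSE sz_n.
  by exists [::]; split=> //; apply: tequiv_refl.
have init_zs : all (initial^~ (z :: s)) (initials (z :: s)).
  by apply/allP => x; rewrite mem_initials.
have [w' zsw'] := tequiv_cat_initial (filter_uniq _ (enum_uniq Sigma)) init_zs.
have [|F [FF w'F]] := IHn w'.
  apply: leq_trans sz_n; rewrite (tequiv_size zsw') size_cat -add1n leq_add2r.
  by rewrite -has_predT; apply/hasP; exists z; rewrite ?mem_initials /= ?eqxx.
exists (initials (z :: s) :: F); split; last first.
  exact: tequiv_trans zsw' (tequiv_catl _ w'F).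
rewrite is_foata_cons foata_step_initials //= FF /=.
apply/allP => a aF; apply: initials_dep zsw' _.
by rewrite (tequiv_initial a w'F) foata_initial.
Qed.

Variable Sigma0 : {set Sigma}.

Lemma inB_noninitial u : inB I Sigma0 u <-> {in Sigma0, forall x, ~~ initial x u}.
Proof.
split=> [[uE | [F [FF uF headF]]] x xS0 | noinit].
- by rewrite (tequiv_initial x uE).
- rewrite (tequiv_initial x uF) foata_initial //.
  by apply: contraL xS0 => /(allP headF).
have [F [FF uF]] := foata_exists u.
right; exists F; split=> //; apply/allP => x.
rewrite -foata_initial // -(tequiv_initial x uF).
by apply: contraL => /noinit.
Qed.

Lemma decomposition_exists w : exists a u,
  [/\ all (mem Sigma0) a, {in Sigma0, forall x, ~~ initial x u} & teq w (a ++ u)].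
Proof.
have [n] := ubnP (size w); elim: n w => // n IHn w /ltnSE sz_n.
have [x /andP [xS0 xw] | noinit] := pickP [pred x in Sigma0 | initial x w]; last first.
  exists [::], w; split=> //; last exact: tequiv_refl.
  by move=> x xS0; have := noinit x; rewrite /= xS0 /= => ->.
have [|a [u [aS0 uS0 wau]]] := IHn (rem x w).
  rewrite size_rem ?initial_mem //; apply: leq_trans sz_n.
  by rewrite ltn_predL -has_predT; apply/hasP; exists x => //; apply: initial_mem.
exists (x :: a), u; split=> /=; first by rewrite xS0.
- exact: uS0.
- exact: tequiv_trans (tequiv_cons_rem xw) (tequiv_catl [:: x] wau).
Qed.

Lemma decomposition_unique a b u v :
  all (mem Sigma0) a -> all (mem Sigma0) b ->
  {in Sigma0, forall x, ~~ initial x u} -> {in Sigma0, forall x, ~~ initial x v} ->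
  teq (a ++ u) (b ++ v) -> teq a b /\ teq u v.
Proof.
move=> + + uS0 vS0; elim: a b => [|x a IH] b /= aS0 bS0 aubv.
  case: b bS0 aubv => [_ uv | y b /andP [yS0 _] /(tequiv_initial y)].
    by split=> //; apply: tequiv_refl.
  by rewrite /= eqxx => yu; have := uS0 y yS0; rewrite yu.
case/andP: aS0 => xS0 aS0.
have : initial x (b ++ v) by rewrite -(tequiv_initial x aubv) /= eqxx.
rewrite initial_cat (negPf (vS0 x xS0)) andbF orbF => xb.
have bx := tequiv_cons_rem xb.
have remS0 : all (mem Sigma0) (rem x b).
  by apply/allP => y /mem_rem; apply: (allP bS0).
have [ab uv] := IH _ aS0 remS0 (tequiv_consK (tequiv_trans aubv (tequiv_catr v bx))).
by split=> //; apply: tequiv_trans (tequiv_catl [:: x] ab) (tequiv_sym bx).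
Qed.

End Traces.

Theorem mainTheorem3 (Sigma : finType) (I : rel Sigma)
  (I_sym : symmetric I) (I_irr : irreflexive I) (Sigma0 : {set Sigma}) :
  (forall w : seq Sigma, exists a u : seq Sigma,
      [/\ inM0 I Sigma0 a, inB I Sigma0 u & tequiv I w (a ++ u)]) /\
  (forall a b u v : seq Sigma,
      inM0 I Sigma0 a -> inM0 I Sigma0 b -> inB I Sigma0 u -> inB I Sigma0 v ->
      tequiv I (a ++ u) (b ++ v) -> tequiv I a b /\ tequiv I u v).
Proof.
split=> [w | a b u v [a0 [a0S0 aa0]] [b0 [b0S0 bb0]]].
  have [a [u [aS0 uS0 wau]]] := decomposition_exists I_sym I_irr Sigma0 w.
  exists a, u; split=> //; last exact/inB_noninitial.
  by exists a; split=> //; apply: tequiv_refl.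
move=> /(inB_noninitial I_sym I_irr) uS0 /(inB_noninitial I_sym I_irr) vS0 aubv.
have a0ub0v : tequiv I (a0 ++ u) (b0 ++ v).
  apply: tequiv_trans (tequiv_catr u (tequiv_sym aa0)) _.
  exact: tequiv_trans aubv (tequiv_catr v bb0).
have [a0b0 uv] := decomposition_unique I_sym I_irr a0S0 b0S0 uS0 vS0 a0ub0v.
by split=> //; apply: tequiv_trans aa0 (tequiv_trans a0b0 (tequiv_sym bb0)).
Qed.
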